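(* Let $n,k\in\mathbb N$ and let $G=(V,E)$ be a connected $n$-quasitransitive graph with all degrees at most $k$. Then there exist a connected vertex-transitive graph $G'=(V',E')$ with all degrees at most $(k+1)^{2n}$ and $\operatorname{diam}(G')\le\operatorname{diam}(G)$, and an injective $(2n,n)$-rough isometry $G'\to G$ (i.e. from $V'$ to $V$). Moreover, if $G$ is finite then one may additionally require $|V|/n\le|V'|\le|V|$.
   Context: $G$ is $n$-quasitransitive if $\mathrm{Aut}(G)$ acting on $V$ has at most $n$ orbits. With $d$ the graph distance on each graph, a map $\phi:V'\to V$ is an $(\alpha,\beta)$-rough isometry if $\alpha^{-1}d(x,y)-\beta\le d(\phi(x),\phi(y))\le\alpha d(x,y)+\beta$ for all $x,y\in V'$, and for every $y\in V$ there is $x\in V'$ with $d(\phi(x),y)\le\beta$. *)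

From Stdlib Require Import Reals List ClassicalEpsilon.
Import ListNotations.
Open Scope R_scope.

Definition simple_graph (V : Type) (adj : V -> V -> Prop) : Prop :=
  (forall x y, adj x y -> adj y x) /\ (forall x, ~ adj x x).

Inductive walk {V : Type} (adj : V -> V -> Prop) : V -> V -> nat -> Prop :=
| walk0 : forall x, walk adj x x 0
| walkS : forall x y z m, adj x y -> walk adj y z m -> walk adj x z (S m).

Definition connected (V : Type) (adj : V -> V -> Prop) : Prop :=
  inhabited V /\ forall x y : V, exists m, walk adj x y m.

(* Graph distance: the least length of a walk (meaningful for connected graphs). *)
Definition gdist {V : Type} (adj : V -> V -> Prop) (x y : V) : nat :=
  epsilon (inhabits 0%nat)
    (fun d => walk adj x y d /\ forall m, walk adj x y m -> (d <= m)%nat).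

Definition max_degree_le (V : Type) (adj : V -> V -> Prop) (k : nat) : Prop :=
  forall v : V, exists l : list V, (length l <= k)%nat /\
    forall w, adj v w -> In w l.

Definition automorphism (V : Type) (adj : V -> V -> Prop) (f : V -> V) : Prop :=
  (exists g : V -> V, (forall x, g (f x) = x) /\ (forall x, f (g x) = x)) /\
  (forall x y, adj x y <-> adj (f x) (f y)).

(* n-quasitransitive: Aut(G) acting on V has at most n orbits, i.e. there are
   at most n vertices whose orbits cover V. *)
Definition quasitransitive (V : Type) (adj : V -> V -> Prop) (n : nat) : Prop :=
  exists reps : list V, (length reps <= n)%nat /\
    forall v : V, exists r f, In r reps /\ automorphism V adj f /\ f r = v.

Definition vertex_transitive (V : Type) (adj : V -> V -> Prop) : Prop :=
  forall x y : V, exists f, automorphism V adj f /\ f x = y.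

(* diam(G') <= diam(G) in the extended naturals. *)
Definition diam_le (V' : Type) (adj' : V' -> V' -> Prop)
  (V : Type) (adj : V -> V -> Prop) : Prop :=
  forall m : nat, (forall x y : V, (gdist adj x y <= m)%nat) ->
    forall x' y' : V', (gdist adj' x' y' <= m)%nat.

Definition rough_isometry (V' : Type) (adj' : V' -> V' -> Prop)
  (V : Type) (adj : V -> V -> Prop) (alpha beta : R) (phi : V' -> V) : Prop :=
  (forall x y : V',
     / alpha * INR (gdist adj' x y) - beta <= INR (gdist adj (phi x) (phi y)) /\
     INR (gdist adj (phi x) (phi y)) <= alpha * INR (gdist adj' x y) + beta) /\
  (forall y : V, exists x : V', INR (gdist adj (phi x) y) <= beta).

Definition has_card (V : Type) (c : nat) : Prop :=
  exists l : list V, NoDup l /\ (forall x, In x l) /\ length l = c.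

From Stdlib Require Import Reals List Lia Lra Classical ClassicalEpsilon ProofIrrelevance Wf_nat.
Import ListNotations.
Open Scope R_scope.

(* Fix an orbit O of Aut(G).  For j >= 0 the j-neighbourhood of O is
   Aut-invariant, so it is a union of orbits; by connectivity, as long as it
   is not all of V, going from j to j+1 captures at least one new orbit.
   Since there are at most n orbits, every vertex lies within n-1 of O.

   G' is the 2n-net on O: points of O, adjacent when at distance <= 2n in G.
   Aut(G) acts on G' and O is one orbit, so G' is vertex-transitive; its
   degree is at most the size of a 2n-ball of G, i.e. (k+1)^(2n).  A
   retraction V -> O moving points by <= n-1 maps G-edges to G'-edges or
   loops (2(n-1)+1 <= 2n), so d' <= d on O, while each G'-edge is a G-walk of
   length <= 2n, so d <= 2n d'.  Hence the inclusion O -> V is an injective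
   (2n, n)-rough isometry and diam G' <= diam G.  For finite G, choosing O
   to be a largest orbit gives |O| >= |V|/n by pigeonhole. *)

Section Walks.
Context {V : Type} (adj : V -> V -> Prop).

Lemma walk_app x y z m1 m2 :
  walk adj x y m1 -> walk adj y z m2 -> walk adj x z (m1 + m2).
Proof.
  intros H1; induction H1; intros H2; simpl; [exact H2|].
  econstructor; eauto.
Qed.

Lemma walk_rev x y m :
  (forall a b, adj a b -> adj b a) -> walk adj x y m -> walk adj y x m.
Proof.
  intros Hsym H; induction H as [|x y z m Hxy _ IH]; [constructor|].
  replace (S m) with (m + 1)%nat by lia.
  eapply walk_app; [exact IH|]. econstructor; [apply Hsym, Hxy|constructor].
Qed.

Lemma gdist_spec x y m : walk adj x y m ->
  walk adj x y (gdist adj x y) /\ (gdist adj x y <= m)%nat.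
Proof.
  intros Hw. unfold gdist.
  destruct (dec_inh_nat_subset_has_unique_least_element (walk adj x y)
    (fun d => classic _) (ex_intro _ m Hw)) as [d [Hd _]].
  destruct (epsilon_spec (inhabits 0%nat)
    (fun d => walk adj x y d /\ forall m, walk adj x y m -> (d <= m)%nat)
    (ex_intro _ d Hd)) as [Hwalk Hleast].
  auto.
Qed.

Definition near (X : V -> Prop) (j : nat) (v : V) : Prop :=
  exists u a, X u /\ (a <= j)%nat /\ walk adj v u a.

End Walks.

Section Automorphisms.
Context {V : Type} (adj : V -> V -> Prop).

Lemma aut_id : automorphism V adj (fun x => x).
Proof. split; [exists (fun x => x); split; reflexivity | intros; tauto]. Qed.

Lemma aut_comp f g : automorphism V adj f -> automorphism V adj g ->
  automorphism V adj (fun x => f (g x)).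
Proof.
  intros [[fi [Hf1 Hf2]] Hfa] [[gi [Hg1 Hg2]] Hga]. split.
  - exists (fun x => gi (fi x)). split; intros x; [rewrite Hf1 | rewrite Hg2]; auto.
  - intros x y. rewrite Hga, Hfa. tauto.
Qed.

Lemma aut_inv f : automorphism V adj f -> exists g,
  automorphism V adj g /\ (forall x, g (f x) = x) /\ (forall x, f (g x) = x).
Proof.
  intros [[g [Hgf Hfg]] Ha]. exists g. repeat split; auto.
  - exists f; auto.
  - intros H. apply Ha. rewrite !Hfg. exact H.
  - intros H. apply Ha in H. rewrite !Hfg in H. exact H.
Qed.

Lemma walk_aut f x y m :
  automorphism V adj f -> walk adj x y m -> walk adj (f x) (f y) m.
Proof.
  intros [_ Ha] H; induction H as [|x y z m Hxy _ IH]; [constructor|].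
  apply walkS with (f y); [apply (proj1 (Ha x y)), Hxy | exact IH].
Qed.

Lemma invariant_iff (P : V -> Prop) f v :
  (forall g w, automorphism V adj g -> P w -> P (g w)) ->
  automorphism V adj f -> (P v <-> P (f v)).
Proof.
  intros Hinv Hf. split; [apply Hinv, Hf|].
  destruct (aut_inv f Hf) as [g [Hg [Hgf _]]].
  intros H. rewrite <- (Hgf v). apply Hinv; assumption.
Qed.

Definition orbit (r v : V) : Prop := exists f, automorphism V adj f /\ f r = v.

Lemma orbit_refl r : orbit r r.
Proof. exists (fun x => x). split; [apply aut_id | reflexivity]. Qed.

Lemma orbit_aut r h v :
  automorphism V adj h -> orbit r v -> orbit r (h v).
Proof.
  intros Hh [f [Hf <-]]. exists (fun x => h (f x)). split; [apply aut_comp|]; auto.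
Qed.

Lemma orbit_transitive r x y : orbit r x -> orbit r y ->
  exists h, automorphism V adj h /\ h x = y.
Proof.
  intros [f [Hf <-]] [g [Hg <-]].
  destruct (aut_inv f Hf) as [fi [Hfi [Hfif _]]].
  exists (fun v => g (fi v)). split; [apply aut_comp; assumption|].
  rewrite Hfif. reflexivity.
Qed.

Lemma near_aut (X : V -> Prop) j f v :
  (forall g w, automorphism V adj g -> X w -> X (g w)) ->
  automorphism V adj f -> near adj X j v -> near adj X j (f v).
Proof.
  intros HX Hf [u [a [Hu [Ha Hw]]]]. exists (f u), a.
  repeat split; auto. apply walk_aut; auto.
Qed.

End Automorphisms.

Section Counting.
Context {A : Type}.

Definition decP (P : A -> Prop) (x : A) : bool :=
  if excluded_middle_informative (P x) then true else false.

Lemma decP_true P x : decP P x = true <-> P x.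
Proof.
  unfold decP; destruct (excluded_middle_informative (P x)); split; congruence.
Qed.

Definition countP (P : A -> Prop) (l : list A) : nat := length (filter (decP P) l).

Lemma countP_cons P x l :
  countP P (x :: l) = ((if decP P x then 1 else 0) + countP P l)%nat.
Proof. unfold countP; simpl; destruct (decP P x); reflexivity. Qed.

Lemma countP_mono (P Q : A -> Prop) l : (forall x, P x -> Q x) ->
  (countP P l <= countP Q l)%nat.
Proof.
  intros HPQ; induction l as [|x l IH]; [apply Nat.le_0_l|].
  rewrite !countP_cons.
  destruct (decP P x) eqn:Hp, (decP Q x) eqn:Hq; try lia.
  apply decP_true, HPQ, decP_true in Hp. congruence.
Qed.

Lemma countP_strict (P Q : A -> Prop) l r : (forall x, P x -> Q x) ->
  In r l -> Q r -> ~ P r -> (countP P l < countP Q l)%nat.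
Proof.
  intros HPQ Hr HQ HP; induction l as [|x l IH]; [contradiction|].
  rewrite !countP_cons. pose proof (countP_mono P Q l HPQ).
  destruct Hr as [->|Hr].
  - rewrite (proj2 (decP_true Q r) HQ).
    destruct (decP P r) eqn:Hp; [apply decP_true in Hp; contradiction | lia].
  - specialize (IH Hr).
    destruct (decP P x) eqn:Hp, (decP Q x) eqn:Hq; try lia.
    apply decP_true, HPQ, decP_true in Hp. congruence.
Qed.

Lemma countP_full (P : A -> Prop) l : countP P l = length l ->
  forall x, In x l -> P x.
Proof.
  intros Hl x Hx. apply decP_true.
  exact (proj1 (forallb_forall _ l) (filter_length_forallb _ l Hl) x Hx).
Qed.

Lemma countP_cover (P : A -> A -> Prop) (reps l : list A) :
  (forall x, In x l -> exists r, In r reps /\ P r x) ->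
  (length l <= list_sum (map (fun r => countP (P r) l) reps))%nat.
Proof.
  induction l as [|x l IH]; intros Hcov; simpl; [lia|].
  assert (Hsplit : forall rs, list_sum (map (fun r => countP (P r) (x :: l)) rs) =
    (list_sum (map (fun r => if decP (P r) x then 1 else 0) rs)
     + list_sum (map (fun r => countP (P r) l) rs))%nat).
  { induction rs as [|r rs IHrs]; simpl; [reflexivity|].
    rewrite IHrs, countP_cons. lia. }
  rewrite Hsplit.
  destruct (Hcov x (or_introl eq_refl)) as [r [Hr HPr]].
  assert (Hone : (1 <= list_sum (map (fun r => if decP (P r) x then 1 else 0) reps))%nat).
  { apply in_split in Hr as [rs1 [rs2 ->]].
    rewrite map_app, list_sum_app. simpl. rewrite (proj2 (decP_true _ _) HPr). lia. }
  specialize (IH (fun y Hy => Hcov y (or_intror Hy))). lia.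
Qed.

Lemma list_sum_le_max (f : A -> nat) l : l <> [] ->
  exists r, In r l /\ (list_sum (map f l) <= length l * f r)%nat.
Proof.
  induction l as [|a t IH]; intros Hne; [congruence|].
  destruct t as [|b t]; [exists a; simpl; split; auto; lia|].
  destruct IH as [r [Hr Hs]]; [congruence|].
  destruct (Nat.le_gt_cases (f a) (f r)).
  - exists r. split; [right; exact Hr|]. simpl in *. nia.
  - exists a. split; [left; reflexivity|]. simpl in *. nia.
Qed.

Lemma countP_enum_invariant (P : A -> Prop) l1 l2 :
  NoDup l1 -> NoDup l2 -> (forall x, In x l1) -> (forall x, In x l2) ->
  countP P l1 = countP P l2.
Proof.
  intros N1 N2 F1 F2. unfold countP.
  apply Nat.le_antisymm; apply NoDup_incl_length; try apply NoDup_filter; auto;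
    intros x Hx; apply filter_In in Hx as [_ Hx]; apply filter_In; auto.
Qed.

Fixpoint sig_list (P : A -> Prop) (l : list A) : list {x | P x} :=
  match l with
  | [] => []
  | x :: t => match excluded_middle_informative (P x) with
              | left p => exist P x p :: sig_list P t
              | right _ => sig_list P t
              end
  end.

Lemma sig_list_proj P l : map (@proj1_sig _ _) (sig_list P l) = filter (decP P) l.
Proof.
  induction l as [|x l IH]; simpl; [reflexivity|]. unfold decP at 1.
  destruct (excluded_middle_informative (P x)); simpl; congruence.
Qed.

Lemma sig_list_length P l : length (sig_list P l) = countP P l.
Proof. unfold countP. rewrite <- sig_list_proj, length_map. reflexivity. Qed.

Lemma sig_list_In P l (x : {x | P x}) : In (proj1_sig x) l -> In x (sig_list P l).
Proof.
  intros Hx.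
  assert (Hm : In (proj1_sig x) (map (@proj1_sig _ _) (sig_list P l))).
  { rewrite sig_list_proj. apply filter_In. split; [exact Hx|].
    apply decP_true, proj2_sig. }
  apply in_map_iff in Hm as [y [Hyx Hy]].
  rewrite <- (eq_sig_hprop (fun z => proof_irrelevance (P z)) y x Hyx). exact Hy.
Qed.

Lemma sig_list_NoDup P l : NoDup l -> NoDup (sig_list P l).
Proof.
  intros Hl. apply (NoDup_map_inv (@proj1_sig _ _)).
  rewrite sig_list_proj. apply NoDup_filter, Hl.
Qed.

End Counting.

Section OrbitRadius.
Context {V : Type} (adj : V -> V -> Prop).

Lemma near_frontier (X : V -> Prop) j w u m : walk adj w u m -> X u ->
  ~ near adj X j w -> exists v, near adj X (S j) v /\ ~ near adj X j v.
Proof.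
  induction 1 as [x|x y z m Hxy _ IH]; intros Hu Hout.
  - exfalso. apply Hout. exists x, 0%nat. repeat split; [exact Hu | lia | constructor].
  - destruct (classic (near adj X j y)) as [[u' [a [Hu' [Ha Hw']]]]|Hy].
    + exists x. split; [|exact Hout].
      exists u', (S a). repeat split; [exact Hu' | lia | econstructor; eauto].
    + apply IH; assumption.
Qed.

Lemma near_weaken (X : V -> Prop) j v : near adj X j v -> near adj X (S j) v.
Proof. intros [u [a [Hu [Ha Hw]]]]. exists u, a. repeat split; auto. Qed.

Lemma orbit_near_count (reps : list V) r :
  connected V adj ->
  (forall v, exists r' f, In r' reps /\ automorphism V adj f /\ f r' = v) ->
  forall j, (forall v, near adj (orbit adj r) j v) \/
            (S j <= countP (near adj (orbit adj r) j) reps)%nat.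
Proof.
  intros [_ Hconn] Hcov.
  assert (Hinv : forall j g w, automorphism V adj g ->
            near adj (orbit adj r) j w -> near adj (orbit adj r) j (g w)).
  { intros j g w Hg. apply near_aut; [intros; apply orbit_aut|]; assumption. }
  assert (Hrep : forall v, exists r', In r' reps /\
            forall j, near adj (orbit adj r) j r' <-> near adj (orbit adj r) j v).
  { intros v. destruct (Hcov v) as [r' [f [Hr' [Hf <-]]]].
    exists r'. split; [exact Hr'|]. intros j. apply (invariant_iff adj); auto. }
  induction j as [|j IH].
  - right. destruct (Hrep r) as [r' [Hr' Hr'j]].
    enough (countP (fun _ => False) reps < countP (near adj (orbit adj r) 0) reps)%nat
      by lia.
    apply (countP_strict _ _ reps r'); [tauto | exact Hr' | | tauto].
    apply Hr'j. exists r, 0%nat. repeat split; [apply orbit_refl | lia | constructor].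
  - destruct IH as [Hall|Hcnt]; [left; intros v; apply near_weaken, Hall|].
    destruct (classic (forall v, near adj (orbit adj r) (S j) v)) as [Hall|Hmiss];
      [left; exact Hall|right].
    apply not_all_ex_not in Hmiss as [w Hw].
    destruct (Hconn w r) as [m Hm].
    destruct (near_frontier _ j w r m Hm (orbit_refl adj r)) as [v [Hv Hv']];
      [intros H; apply Hw, near_weaken, H|].
    destruct (Hrep v) as [r' [Hr' Hr'j]].
    assert (countP (near adj (orbit adj r) j) reps <
            countP (near adj (orbit adj r) (S j)) reps)%nat.
    { apply (countP_strict _ _ reps r'); [apply near_weaken | exact Hr' | |];
        rewrite Hr'j; assumption. }
    lia.
Qed.

Lemma orbit_near_all (reps : list V) n r :
  connected V adj -> (length reps <= n)%nat ->
  (forall v, exists r' f, In r' reps /\ automorphism V adj f /\ f r' = v) ->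
  forall v, near adj (orbit adj r) (n - 1) v.
Proof.
  intros Hconn Hlen Hcov.
  destruct (orbit_near_count reps r Hconn Hcov (n - 1)) as [Hall|Hcnt]; [exact Hall|].
  intros v. destruct (Hcov v) as [r' [f [Hr' [Hf <-]]]].
  apply near_aut; [intros; apply orbit_aut; assumption | exact Hf |].
  apply (countP_full _ reps); [|exact Hr'].
  pose proof (filter_length_le (decP (near adj (orbit adj r) (n - 1))) reps).
  unfold countP in *. lia.
Qed.

End OrbitRadius.

(* In a finite n-quasitransitive graph some orbit has at least |V|/n
   elements; stated for every enumeration of V, to be independent of it. *)
Lemma large_orbit {V : Type} (adj : V -> V -> Prop) (reps : list V) n :
  inhabited V -> (length reps <= n)%nat ->
  (forall v, exists r' f, In r' reps /\ automorphism V adj f /\ f r' = v) ->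
  exists r, forall l, NoDup l -> (forall x, In x l) ->
    (length l <= n * countP (orbit adj r) l)%nat.
Proof.
  intros [v0] Hlen Hcov.
  destruct (Hcov v0) as [r0 [_ [Hr0 _]]].
  destruct (classic (exists l0 : list V, NoDup l0 /\ forall x, In x l0))
    as [[l0 [Hnd0 Hall0]]|Hinf];
    [|exists r0; intros l Hnd Hall; exfalso; eauto].
  destruct (list_sum_le_max (fun r => countP (orbit adj r) l0) reps)
    as [r [Hr Hmax]]; [intros ->; contradiction|].
  assert (Hsum : (length l0 <= list_sum (map (fun r => countP (orbit adj r) l0) reps))%nat).
  { apply countP_cover. intros x _. destruct (Hcov x) as [r' [f [Hr' [Hf Hfx]]]].
    exists r'. split; [exact Hr'|]. exists f; auto. }
  exists r. intros l Hnd Hall.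
  assert (Hl : length l = length l0).
  { apply Nat.le_antisymm; apply NoDup_incl_length; auto; intros x _; auto. }
  rewrite Hl, (countP_enum_invariant _ l l0); auto. nia.
Qed.

Section Balls.
Context {V : Type} (adj : V -> V -> Prop).

Fixpoint ball (nb : V -> list V) (m : nat) (v : V) : list V :=
  match m with 0 => [v] | S m' => v :: flat_map (ball nb m') (nb v) end.

Lemma ball_length nb k : (forall v, (length (nb v) <= k)%nat) ->
  forall m v, (length (ball nb m v) <= (k + 1) ^ m)%nat.
Proof.
  intros Hk. induction m as [|m IH]; intros v; simpl; [lia|].
  rewrite length_flat_map.
  assert (Hsum : forall l, (list_sum (map (fun w => length (ball nb m w)) l)
                            <= length l * (k + 1) ^ m)%nat).
  { induction l as [|w l IHl]; simpl; [lia|]. specialize (IH w). lia. }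
  specialize (Hsum (nb v)). specialize (Hk v).
  assert (1 <= (k + 1) ^ m)%nat by (apply Nat.neq_0_lt_0, Nat.pow_nonzero; lia).
  nia.
Qed.

Lemma ball_In nb : (forall v w, adj v w -> In w (nb v)) ->
  forall m v w j, walk adj v w j -> (j <= m)%nat -> In w (ball nb m v).
Proof.
  intros Hnb m. induction m as [|m IH]; intros v w j Hw Hj.
  - destruct Hw; [left; reflexivity | lia].
  - destruct Hw as [|x y z j Hxy Hw]; [left; reflexivity|].
    right. apply in_flat_map. exists y. split; [apply Hnb, Hxy|]. apply (IH y z j); auto; lia.
Qed.

Lemma bounded_balls k : max_degree_le V adj k -> forall m v,
  exists l, (length l <= (k + 1) ^ m)%nat /\
    forall w j, walk adj v w j -> (j <= m)%nat -> In w l.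
Proof.
  intros Hdeg m v.
  destruct (choice (fun v l => (length l <= k)%nat /\ forall w, adj v w -> In w l) Hdeg)
    as [nb Hnb].
  exists (ball nb m v). split.
  - apply ball_length. intros u. apply Hnb.
  - apply ball_In. intros u w. apply Hnb.
Qed.

End Balls.

Section NetGraph.
Context {V : Type} (adj : V -> V -> Prop) (X : V -> Prop) (R : nat).

Definition net_adj (p q : {v | X v}) : Prop :=
  proj1_sig p <> proj1_sig q /\
  exists m, (m <= R)%nat /\ walk adj (proj1_sig p) (proj1_sig q) m.

Lemma net_simple : (forall a b, adj a b -> adj b a) -> simple_graph {v | X v} net_adj.
Proof.
  intros Hsym. split.
  - intros p q [Hne [m [Hm Hw]]]. split; [auto|]. exists m. split; [exact Hm|].
    apply walk_rev; assumption.
  - intros p [Hne _]. apply Hne. reflexivity.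
Qed.

Lemma net_walk_expand p q m : walk net_adj p q m ->
  exists m2, (m2 <= R * m)%nat /\ walk adj (proj1_sig p) (proj1_sig q) m2.
Proof.
  induction 1 as [|x y z m [_ [m0 [Hm0 Hw0]]] _ [m2 [Hm2 Hw2]]];
    [exists 0%nat; split; [lia | constructor]|].
  exists (m0 + m2)%nat. split; [nia|]. eapply walk_app; eauto.
Qed.

(* Net balls of radius 1 sit inside ambient balls of radius R. *)
Lemma net_degree k : max_degree_le V adj k ->
  max_degree_le {v | X v} net_adj ((k + 1) ^ R)%nat.
Proof.
  intros Hdeg p.
  destruct (bounded_balls adj k Hdeg R (proj1_sig p)) as [l [Hlen Hl]].
  exists (sig_list X l). split.
  - rewrite sig_list_length. unfold countP.
    eapply Nat.le_trans; [apply filter_length_le | exact Hlen].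
  - intros q [_ [m [Hm Hw]]]. apply sig_list_In. eapply Hl; eauto.
Qed.

Lemma net_aut h :
  (forall g v, automorphism V adj g -> X v -> X (g v)) ->
  automorphism V adj h -> exists h' : {v | X v} -> {v | X v},
    automorphism {v | X v} net_adj h' /\ forall p, proj1_sig (h' p) = h (proj1_sig p).
Proof.
  intros HX Hh. destruct (aut_inv adj h Hh) as [hi [Hhi [Hhih Hhhi]]].
  set (lift g (Hg : automorphism V adj g) (p : {v | X v}) :=
         exist X (g (proj1_sig p)) (HX g _ Hg (proj2_sig p))).
  exists (lift h Hh). split; [|reflexivity]. split.
  - exists (lift hi Hhi).
    split; intros p; apply (eq_sig_hprop (fun z => proof_irrelevance (X z))); simpl; auto.
  - intros p q. unfold net_adj; simpl. split.
    + intros [Hne [m [Hm Hw]]]. split.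
      * intros Heq. apply Hne. rewrite <- (Hhih (proj1_sig p)), Heq. apply Hhih.
      * exists m. split; [exact Hm|]. apply walk_aut; assumption.
    + intros [Hne [m [Hm Hw]]]. split.
      * intros Heq. apply Hne. rewrite Heq. reflexivity.
      * exists m. split; [exact Hm|].
        rewrite <- (Hhih (proj1_sig p)), <- (Hhih (proj1_sig q)).
        apply walk_aut; assumption.
Qed.

Lemma near_retraction rho : (forall v, near adj X rho v) ->
  exists pi : V -> {v | X v},
    (forall v, exists a, (a <= rho)%nat /\ walk adj v (proj1_sig (pi v)) a) /\
    (forall p, pi (proj1_sig p) = p).
Proof.
  intros Hnear.
  assert (Hpick : forall v, exists p : {v | X v}, exists a,
            (a <= rho)%nat /\ walk adj v (proj1_sig p) a).
  { intros v. destruct (Hnear v) as [u [a [Hu Hw]]]. exists (exist X u Hu), a. exact Hw. }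
  destruct (choice _ Hpick) as [pick Hpickp].
  exists (fun v => match excluded_middle_informative (X v) with
                   | left Hv => exist X v Hv
                   | right _ => pick v end).
  split.
  - intros v. destruct (excluded_middle_informative (X v)); [|apply Hpickp].
    exists 0%nat. split; [lia | constructor].
  - intros [v Hv]; simpl. destruct (excluded_middle_informative (X v)) as [Hv'|];
      [|contradiction].
    f_equal. apply proof_irrelevance.
Qed.

Section Retraction.
Variables (rho : nat) (pi : V -> {v | X v}).
Hypothesis adj_sym : forall a b, adj a b -> adj b a.
Hypothesis pi_near : forall v, exists a, (a <= rho)%nat /\ walk adj v (proj1_sig (pi v)) a.
Hypothesis pi_fix : forall p, pi (proj1_sig p) = p.
Hypothesis R_large : (2 * rho + 1 <= R)%nat.

Lemma net_walk_project x y m : walk adj x y m ->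
  exists m', (m' <= m)%nat /\ walk net_adj (pi x) (pi y) m'.
Proof.
  induction 1 as [x|x y z m Hxy _ [m' [Hm' Hw']]];
    [exists 0%nat; split; [lia | constructor]|].
  destruct (classic (proj1_sig (pi x) = proj1_sig (pi y))) as [Heq|Hne].
  - apply (eq_sig_hprop (fun z => proof_irrelevance (X z))) in Heq.
    exists m'. rewrite Heq. split; [lia | exact Hw'].
  - exists (S m'). split; [lia|]. apply walkS with (pi y); [|exact Hw'].
    split; [exact Hne|].
    destruct (pi_near x) as [a [Ha Hwa]], (pi_near y) as [b [Hb Hwb]].
    exists (a + (1 + b))%nat. split; [lia|].
    apply walk_app with x; [apply walk_rev; assumption|].
    apply walkS with y; assumption.
Qed.

Lemma net_connected : connected V adj -> connected {v | X v} net_adj.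
Proof.
  intros [[v0] Hconn]. split; [exact (inhabits (pi v0))|].
  intros p q. destruct (Hconn (proj1_sig p) (proj1_sig q)) as [m Hm].
  destruct (net_walk_project _ _ _ Hm) as [m' [_ Hw]].
  rewrite !pi_fix in Hw. eauto.
Qed.

Lemma net_gdist_bounds : connected V adj -> forall p q,
  (gdist net_adj p q <= gdist adj (proj1_sig p) (proj1_sig q))%nat /\
  (gdist adj (proj1_sig p) (proj1_sig q) <= R * gdist net_adj p q)%nat.
Proof.
  intros Hconn p q. split.
  - destruct (proj2 Hconn (proj1_sig p) (proj1_sig q)) as [m Hm].
    destruct (gdist_spec adj _ _ _ Hm) as [Hd _].
    destruct (net_walk_project _ _ _ Hd) as [m' [Hm' Hw]]. rewrite !pi_fix in Hw.
    destruct (gdist_spec net_adj _ _ _ Hw) as [_ Hle]. lia.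
  - destruct (proj2 (net_connected Hconn) p q) as [m Hm].
    destruct (gdist_spec net_adj _ _ _ Hm) as [Hd _].
    destruct (net_walk_expand _ _ _ Hd) as [m2 [Hm2 Hw]].
    destruct (gdist_spec adj _ _ _ Hw) as [_ Hle]. lia.
Qed.

End Retraction.
End NetGraph.

Lemma net_orbit_transitive {V : Type} (adj : V -> V -> Prop) r R :
  vertex_transitive {v | orbit adj r v} (net_adj adj (orbit adj r) R).
Proof.
  intros p q.
  destruct (orbit_transitive adj r _ _ (proj2_sig p) (proj2_sig q)) as [h [Hh Hpq]].
  destruct (net_aut adj (orbit adj r) R h) as [h' [Hh' Hproj]];
    [intros; apply orbit_aut; assumption | exact Hh |].
  exists h'. split; [exact Hh'|].
  apply (eq_sig_hprop (fun z => proof_irrelevance _)). rewrite Hproj. exact Hpq.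
Qed.

Lemma sig_has_card {V : Type} (X : V -> Prop) l :
  NoDup l -> (forall x, In x l) -> has_card {v | X v} (countP X l).
Proof.
  intros Hnd Hall. exists (sig_list X l). repeat split.
  - apply sig_list_NoDup, Hnd.
  - intros x. apply sig_list_In, Hall.
  - apply sig_list_length.
Qed.

Lemma diam_le_of_contraction {V' V : Type} adj' adj (phi : V' -> V) :
  (forall x y, (gdist adj' x y <= gdist adj (phi x) (phi y))%nat) ->
  diam_le V' adj' V adj.
Proof. intros Hc m Hm x y. specialize (Hm (phi x) (phi y)). specialize (Hc x y). lia. Qed.

Lemma rough_isometry_of_bounds {V' V : Type} adj' adj (phi : V' -> V) (a b : nat) :
  (1 <= a)%nat ->
  (forall x y, (gdist adj' x y <= gdist adj (phi x) (phi y)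
                <= a * gdist adj' x y)%nat) ->
  (forall y, exists x, (gdist adj (phi x) y <= b)%nat) ->
  rough_isometry V' adj' V adj (INR a) (INR b) phi.
Proof.
  intros Ha Hbounds Hdense. split.
  - intros x y. destruct (Hbounds x y) as [Hlo Hhi].
    apply le_INR in Hlo. apply le_INR in Hhi. rewrite mult_INR in Hhi.
    apply le_INR in Ha. simpl in Ha.
    pose proof (pos_INR (gdist adj' x y)). pose proof (pos_INR b).
    assert (Hinv : 0 < / INR a <= 1).
    { split; [apply Rinv_0_lt_compat; lra|].
      rewrite <- Rinv_1. apply Rinv_le_contravar; lra. }
    split; nra.
  - intros y. destruct (Hdense y) as [x Hx]. exists x. apply le_INR, Hx.
Qed.

Theorem proposition2p11 (n k : nat) (V : Type) (adj : V -> V -> Prop) :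
  simple_graph V adj -> connected V adj -> quasitransitive V adj n ->
  max_degree_le V adj k ->
  exists (V' : Type) (adj' : V' -> V' -> Prop) (phi : V' -> V),
    simple_graph V' adj' /\ connected V' adj' /\ vertex_transitive V' adj' /\
    max_degree_le V' adj' ((k + 1) ^ (2 * n))%nat /\
    diam_le V' adj' V adj /\
    (forall x y, phi x = phi y -> x = y) /\
    rough_isometry V' adj' V adj (INR (2 * n)) (INR n) phi /\
    (forall N : nat, has_card V N ->
       exists N' : nat, has_card V' N' /\
         INR N / INR n <= INR N' /\ (N' <= N)%nat).
Proof.
  intros [Hsym _] Hconn [reps [Hlen Hcov]] Hdeg.
  assert (Hn : (1 <= n)%nat).
  { destruct Hconn as [[v0] _]. destruct (Hcov v0) as [r0 [_ [Hr0 _]]].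
    destruct reps; [contradiction | simpl in Hlen; lia]. }
  destruct (large_orbit adj reps n (proj1 Hconn) Hlen Hcov) as [r Hlarge].
  destruct (near_retraction adj (orbit adj r) (n - 1)
              (orbit_near_all adj reps n r Hconn Hlen Hcov)) as [pi [Hnear Hfix]].
  pose proof (net_gdist_bounds adj (orbit adj r) (2 * n) (n - 1) pi
                Hsym Hnear Hfix ltac:(lia) Hconn) as Hbounds.
  exists {v | orbit adj r v}, (net_adj adj (orbit adj r) (2 * n)), (@proj1_sig V _).
  split; [apply net_simple, Hsym|].
  split; [exact (net_connected adj (orbit adj r) (2 * n) (n - 1) pi Hsym Hnear Hfix ltac:(lia) Hconn)|].
  split; [apply net_orbit_transitive|].
  split; [apply net_degree, Hdeg|].
  split; [apply (diam_le_of_contraction _ _ (@proj1_sig V _)); intros p q; apply Hbounds|].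
  split; [intros p q; apply (eq_sig_hprop (fun z => proof_irrelevance _))|].
  split.
  { apply rough_isometry_of_bounds; [lia | exact Hbounds|].
    intros y. destruct (Hnear y) as [a [Ha Hw]]. exists (pi y).
    destruct (gdist_spec adj _ _ _ (walk_rev adj _ _ _ Hsym Hw)) as [_ Hle]. lia. }
  intros N [l [Hnd [Hall <-]]]. exists (countP (orbit adj r) l).
  split; [apply sig_has_card; assumption|].
  split; [|apply filter_length_le].
  specialize (Hlarge l Hnd Hall). apply le_INR in Hlarge. rewrite mult_INR in Hlarge.
  assert (0 < INR n) by (apply lt_0_INR; lia).
  apply Rmult_le_reg_r with (INR n); [assumption|].
  unfold Rdiv. rewrite Rmult_assoc, Rinv_l by lra. lra.
Qed.
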